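(* Any distributed algorithm in the LOCAL model (deterministic, or randomized succeeding with high probability) that computes a proper $3$-coloring for every outerplanar graph on $n$ vertices requires $\Omega(n)$ communication rounds.
   Context: LOCAL model: the communication network is the input graph; each vertex has a unique identifier, computation proceeds in synchronous rounds in which each vertex receives messages sent in the previous round, does arbitrary local computation, and sends messages of unbounded size to its neighbors; randomized algorithms may additionally use random bits. The running time is the worst-case number of rounds; at the end each vertex outputs its color. A proper $3$-coloring assigns colors from $\{1,2,3\}$ so that adjacent vertices receive different colors. *)

From HB Require Import structures.
From mathcomp Require Import all_boot all_order all_algebra.
From mathcomp Require Import all_classical all_reals all_analysis.
Set Implicit Arguments. Unset Strict Implicit. Unset Printing Implicit Defensive.
Import Order.TTheory GRing.Theory Num.Theory.
Local Open Scope classical_set_scope.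
Local Open Scope ring_scope.

Definition simple_graph (n : nat) (E : rel 'I_n) : Prop :=
  symmetric E /\ irreflexive E.

(* Outerplanar: the graph has a drawing with all vertices on a circle
   (equivalently, all on the outer face) and edges as non-crossing chords.
   Vertices are placed on the circle in the order given by the injective
   position map [pos]; two chords ab, cd cross iff, in that linear order,
   pos a < pos c < pos b < pos d (up to renaming endpoints). *)
Definition outerplanar (n : nat) (E : rel 'I_n) : Prop :=
  exists pos : 'I_n -> nat, injective pos /\
    forall a b c d : 'I_n, E a b -> E c d ->
      ~ [/\ (pos a < pos c)%N, (pos c < pos b)%N & (pos b < pos d)%N].

Definition port_numbering (n : nat) (E : rel 'I_n) (port : 'I_n -> seq 'I_n) : Prop :=
  forall v, uniq (port v) /\ forall u, (u \in port v) = E v u.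

(* Proper 3-colouring with colours 'I_3 = {0,1,2} (standing for {1,2,3}). *)
Definition proper_3coloring (n : nat) (E : rel 'I_n) (col : 'I_n -> 'I_3) : Prop :=
  forall u v, E u v -> col u != col v.

(* In each synchronous round every vertex sends, through each of its ports,
   a message of arbitrary (unbounded) type computed from its current state,
   then updates its state (arbitrary local computation) from the list of
   messages received, listed in the order of its ports.
   A deterministic algorithm is one that ignores its random tape. *)
Record LocalAlgorithm := {
  la_state : Type;
  la_msg : Type;
  la_init : nat -> nat -> nat -> (nat -> bool) -> la_state;
    (* n, identifier, degree, random tape *)
  la_send : nat -> la_state -> nat -> la_msg;
    (* n, state, port index on which the message is sent *)
  la_step : nat -> la_state -> seq la_msg -> la_state;
  la_out : nat -> la_state -> 'I_3;
  la_rounds : nat -> nat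
}.

Fixpoint la_run (A : LocalAlgorithm) (n : nat) (id : 'I_n -> nat)
    (port : 'I_n -> seq 'I_n) (tape : 'I_n -> nat -> bool) (k : nat)
    : 'I_n -> la_state A :=
  match k with
  | 0 => fun v => @la_init A n (id v) (size (port v)) (tape v)
  | k'.+1 =>
      let s := @la_run A n id port tape k' in
      fun v => @la_step A n (s v)
                 [seq @la_send A n (s u) (index v (port u)) | u <- port v]
  end.

Definition la_output (A : LocalAlgorithm) (n : nat) (id : 'I_n -> nat)
    (port : 'I_n -> seq 'I_n) (tape : 'I_n -> nat -> bool) : 'I_n -> 'I_3 :=
  fun v => @la_out A n (la_run A id port tape (la_rounds A n) v).

(* X gives each vertex an infinite sequence of independent fair coin flips:
   every coordinate event is measurable and every finite set of distinct
   (vertex, index) coordinates takes any prescribed values with probability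
   2^-(number of coordinates). *)
Definition fair_random_tapes (R : realType) (d : measure_display)
    (T : measurableType d) (P : probability T R) (n : nat)
    (X : T -> 'I_n -> nat -> bool) : Prop :=
  (forall v i, measurable [set w | X w v i]) /\
  forall (s : seq ('I_n * nat)) (b : 'I_n * nat -> bool), uniq s ->
    P [set w | forall p, p \in s -> X w p.1 p.2 = b p]
      = ((2%:R : R) ^- size s)%:E.

(* Success is measured by inner
   probability (some measurable event of probability >= 1 - 1/n on which
   the output is proper), so no measurability of A is presupposed. *)
Definition whp_3colors_outerplanar (R : realType) (A : LocalAlgorithm) : Prop :=
  forall (n : nat) (E : rel 'I_n) (id : 'I_n -> nat) (port : 'I_n -> seq 'I_n),
    simple_graph E -> outerplanar E -> injective id -> port_numbering E port ->
    forall (d : measure_display) (T : measurableType d) (P : probability T R)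
           (X : T -> 'I_n -> nat -> bool),
      fair_random_tapes P X ->
      exists S : set T, [/\ measurable S,
        S `<=` [set w | proper_3coloring E (la_output A id port (X w))] &
        ((1 - (n%:R)^-1 : R)%:E <= P S)%E].

From HB Require Import structures.
From mathcomp Require Import all_boot all_order all_algebra.
From mathcomp Require Import all_classical all_reals all_analysis.
From mathcomp Require Import zify lra.
Set Implicit Arguments. Unset Strict Implicit. Unset Printing Implicit Defensive.
Import Order.TTheory GRing.Theory Num.Theory.

(* In the square of a path, any three consecutive vertices form a triangle, so
   a proper 3-colouring is periodic with period 3.  Deleting a vertex m from
   the middle of the path shifts this period by one beyond m.  After r rounds
   a vertex only knows its radius-r neighbourhood, so when m is more than
   2r + 2 positions away from the vertices 0, 1, 2 and from the last vertex n,
   these four vertices output the same colours in both graphs (same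
   identifiers, ports and random bits); this is incompatible with both
   colourings being proper once n >= 4r + 8.  An algorithm succeeding with
   probability at least 1 - 1/n > 1/2 on each graph succeeds on both for some
   random tape, hence r >= n / 8.  Fair random tapes exist: take the binary
   digits of a uniform point of [0, 1]. *)

(** * Squares of paths *)

Definition sqpath_adj (x y : nat) : bool := [&& x != y, x <= y + 2 & y <= x + 2].

(* The square of the path through the vertices other than [m], in increasing
   order: [unbump m] closes the gap at [m], which is left isolated.  Nothing is
   removed when [m >= n]. *)
Definition holed_sqpath (n m : nat) : rel 'I_n := fun u v =>
  [&& u != m :> nat, v != m :> nat & sqpath_adj (unbump m u) (unbump m v)].
Arguments holed_sqpath : clear implicits.

Definition ports_of n (E : rel 'I_n) (v : 'I_n) : seq 'I_n :=
  [seq u <- enum 'I_n | E v u].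

Lemma holed_sqpath_simple n m : simple_graph (holed_sqpath n m).
Proof.
split=> [u v | u]; rewrite /holed_sqpath /sqpath_adj; last by rewrite eqxx !andbF.
by case: (val u != m); case: (val v != m) => //=; lia.
Qed.

Lemma ports_of_numbering n (E : rel 'I_n) : port_numbering E (ports_of E).
Proof.
move=> v; split=> [|u]; first by rewrite filter_uniq ?enum_uniq.
by rewrite mem_filter mem_enum andbT.
Qed.

(* The circular order 0, 2, 4, ..., 5, 3, 1 draws the square of a path with
   non-crossing chords. *)
Definition zigzag (n c : nat) : nat := if odd c then (2 * n - c)%N else c.

Lemma zigzag_noncrossing n a b c d :
  [/\ a < n, b < n, c < n & d < n]%N -> sqpath_adj a b -> sqpath_adj c d ->
  ~ [/\ zigzag n a < zigzag n c, zigzag n c < zigzag n b & zigzag n b < zigzag n d]%N.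
Proof.
rewrite /zigzag /sqpath_adj => -[lt_a lt_b lt_c lt_d] adj_ab adj_cd [ac cb bd].
move: ac cb bd (odd_double_half a) (odd_double_half b) (odd_double_half c)
  (odd_double_half d).
by case: (odd a); case: (odd b); case: (odd c); case: (odd d) => /=; lia.
Qed.

Lemma holed_sqpath_outerplanar n m : outerplanar (holed_sqpath n m).
Proof.
exists (fun u : 'I_n => if u == m :> nat then (3 * n)%N else zigzag n (unbump m u)).
have unbump_lt (u : 'I_n) : (unbump m u < n)%N by rewrite /unbump; have := ltn_ord u; lia.
split=> [u v | a b c d].
- have := unbump_lt u; have := unbump_lt v; rewrite /zigzag /unbump => lt_u lt_v pos_uv.
  apply: ord_inj; move: pos_uv lt_u lt_v.
  by case: eqP; case: eqP; repeat case: ifP; lia.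
- case/and3P=> /negbTE -> /negbTE -> adj_ab /and3P[/negbTE -> /negbTE -> adj_cd].
  exact: zigzag_noncrossing.
Qed.

Lemma ord3_fourth (a b c d : 'I_3) :
  a != b -> b != c -> a != c -> b != d -> c != d -> d = a.
Proof.
by case: a b c d => [[|[|[|?]]] ?] // [[|[|[|?]]] ?] // [[|[|[|?]]] ?] //
   [[|[|[|?]]] ?] // *; apply/val_inj.
Qed.

Lemma three_coloring_periodic (g : nat -> 'I_3) L :
  (forall i j, (j < L)%N -> (i < j <= i + 2)%N -> g i != g j) ->
  forall j, (j < L)%N -> g j = g (j %% 3).
Proof.
move=> proper_g; elim/ltn_ind=> j IH jL.
have [j_lt3 | j_ge3] := ltnP j 3; first by rewrite modn_small.
have [i def_j] : exists i, j = (i + 3)%N by exists (j - 3)%N; lia.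
subst j.
rewrite -modnDmr modnn addn0 -IH; [|lia|lia].
apply: (@ord3_fourth _ (g (i + 1)%N) (g (i + 2)%N)); apply: proper_g; lia.
Qed.

Lemma holed_sqpath_bump n m i j : (bump m i <= n)%N -> (bump m j <= n)%N ->
  holed_sqpath n.+1 m (inord (bump m i)) (inord (bump m j)) = sqpath_adj i j.
Proof.
by move=> hi hj; rewrite /holed_sqpath !inordK // !bumpK -!(eq_sym m) !neq_bump.
Qed.

Lemma holed_sqpath_coloring_periodic n m col :
  proper_3coloring (holed_sqpath n.+1 m) col ->
  forall j, (bump m j <= n)%N -> col (inord (bump m j)) = col (inord (bump m (j %% 3))).
Proof.
move=> proper_col j hj.
apply: (@three_coloring_periodic (fun i => col (inord (bump m i))) j.+1) => // i k kj ik.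
have hk : (bump m k <= n)%N by apply: leq_trans hj; rewrite leq_bump2.
have hi : (bump m i <= n)%N by apply: leq_trans hk; rewrite leq_bump2; lia.
by apply: proper_col; rewrite holed_sqpath_bump // /sqpath_adj; lia.
Qed.

(** * Locality of LOCAL algorithms *)

Fixpoint same_ports n (p1 p2 : 'I_n -> seq 'I_n) (k : nat) (v : 'I_n) : Prop :=
  p1 v = p2 v /\
  if k is k'.+1 then forall u, u \in p1 v -> same_ports p1 p2 k' u else True.

Lemma same_portsW n (p1 p2 : 'I_n -> seq 'I_n) k v :
  same_ports p1 p2 k.+1 v -> same_ports p1 p2 k v.
Proof. by elim: k v => [|k IH] v [e1 e2] //=; split=> // u /e2 /IH. Qed.

Lemma same_ports_eq n (p1 p2 : 'I_n -> seq 'I_n) k v :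
  same_ports p1 p2 k v -> p1 v = p2 v.
Proof. by case: k => [|k] []. Qed.

Lemma la_run_local (A : LocalAlgorithm) n (id : 'I_n -> nat) p1 p2 tape k v :
  same_ports p1 p2 k v -> la_run A id p1 tape k v = la_run A id p2 tape k v.
Proof.
elim: k v => [|k IH] v; first by case=> /= ->.
move=> same_v; have [e1 e2] := same_v; rewrite /= (IH v (same_portsW same_v)) -e1.
congr la_step; apply/eq_in_map => u /e2 same_u.
by rewrite (IH u same_u) (same_ports_eq same_u).
Qed.

Lemma la_output_local (A : LocalAlgorithm) n (id : 'I_n -> nat) p1 p2 tape v :
  same_ports p1 p2 (la_rounds A n) v ->
  la_output A id p1 tape v = la_output A id p2 tape v.
Proof. by move=> same_v; rewrite /la_output (la_run_local _ _ _ same_v). Qed.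

Lemma ports_of_holed_far N m (v : 'I_N) : ((v + 3 <= m) || (m + 3 <= v))%N ->
  ports_of (holed_sqpath N N) v = ports_of (holed_sqpath N m) v.
Proof.
move=> far_v; apply: eq_filter => u; rewrite /holed_sqpath /sqpath_adj /unbump.
by move: far_v (ltn_ord u) (ltn_ord v); lia.
Qed.

Lemma same_ports_holed_far N m k (v : 'I_N) :
  ((v + 2 * k + 3 <= m) || (m + 3 + 2 * k <= v))%N ->
  same_ports (ports_of (holed_sqpath N N)) (ports_of (holed_sqpath N m)) k v.
Proof.
elim: k v => [|k IH] v far_v.
  by split=> //; apply: ports_of_holed_far; lia.
split=> [|u]; first by apply: ports_of_holed_far; lia.
rewrite mem_filter mem_enum andbT => adj_vu; apply: IH.
move: adj_vu far_v (ltn_ord u) (ltn_ord v).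
by rewrite /holed_sqpath /sqpath_adj /unbump; lia.
Qed.

Lemma holed_sqpath_not_both_colored (A : LocalAlgorithm) n m
    (id : 'I_n.+1 -> nat) (tape : 'I_n.+1 -> nat -> bool) :
  let r := la_rounds A n.+1 in
  (2 * r + 5 <= m)%N -> (m + 3 + 2 * r <= n)%N ->
  proper_3coloring (holed_sqpath n.+1 n.+1)
    (la_output A id (ports_of (holed_sqpath n.+1 n.+1)) tape) ->
  ~ proper_3coloring (holed_sqpath n.+1 m)
    (la_output A id (ports_of (holed_sqpath n.+1 m)) tape).
Proof.
move=> r hm hn proper_c0 proper_cm.
set c0 := la_output _ _ _ _ in proper_c0; set cm := la_output _ _ _ _ in proper_cm.
have bump_full j : (j <= n)%N -> bump n.+1 j = j by rewrite /bump; lia.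
have bump_lo j : (j < 3)%N -> bump m j = j by rewrite /bump; lia.
have same_far (v : 'I_n.+1) :
    ((v + 2 * r + 3 <= m) || (m + 3 + 2 * r <= v))%N -> c0 v = cm v.
  by move=> far_v; apply/la_output_local/same_ports_holed_far.
have per_c0 : c0 (inord n) = c0 (inord (n %% 3)).
  have := holed_sqpath_coloring_periodic proper_c0 (j := n).
  by rewrite !bump_full ?leq_mod // => ->.
have per_cm : cm (inord n) = cm (inord (n.-1 %% 3)).
  have := holed_sqpath_coloring_periodic proper_cm (j := n.-1).
  have bump_n : bump m n.-1 = n by rewrite /bump; lia.
  by rewrite bump_n bump_lo ?ltn_mod // => ->.
have c0_mod3 : c0 (inord (n %% 3)) = c0 (inord (n.-1 %% 3)).
  have same_n : c0 (inord n) = cm (inord n) by apply: same_far; rewrite inordK; lia.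
  have same_lo : c0 (inord (n.-1 %% 3)) = cm (inord (n.-1 %% 3)).
    by apply: same_far; rewrite inordK; have := ltn_mod n.-1 3; lia.
  by rewrite -per_c0 same_n per_cm same_lo.
have adj_mod3 : holed_sqpath n.+1 n.+1 (inord (n %% 3)) (inord (n.-1 %% 3)).
  have mod3_le j : (j %% 3 <= n)%N by have := ltn_mod j 3; lia.
  have := @holed_sqpath_bump n n.+1 (n %% 3) (n.-1 %% 3).
  rewrite !bump_full ?mod3_le // => /(_ isT isT) ->.
  by rewrite /sqpath_adj; lia.
by move/eqP: (proper_c0 _ _ adj_mod3); rewrite c0_mod3.
Qed.

(** * Fair coins from a uniform point of [0, 1] *)

Definition bit (j k : nat) : bool := odd (k %/ 2 ^ j).

Lemma bit_small j k : k < 2 ^ j -> bit j k = false.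
Proof. by move=> lt_k; rewrite /bit divn_small. Qed.

Lemma bit_addX j M k : j < M -> bit j (k + 2 ^ M) = bit j k.
Proof.
move=> lt_jM; rewrite /bit divnDr ?dvdn_exp2l 1?ltnW // -expnB ?(ltnW lt_jM) //.
by rewrite oddD oddX subn_eq0 leqNgt lt_jM addbF.
Qed.

Lemma bit_addX_top M k : k < 2 ^ M -> bit M (k + 2 ^ M) = true.
Proof. by move=> lt_k; rewrite /bit divnDr // divnn expn_gt0 divn_small. Qed.

Lemma sum_nat_halves n (F : nat -> nat) :
  \sum_(0 <= k < n.*2) F k = \sum_(0 <= k < n) F k + \sum_(0 <= k < n) F (k + n).
Proof.
rewrite -addnn (@big_cat_nat _ _ _ n) ?leq_addr //=; congr (_ + _).
by rewrite -{1}[n]add0n big_addn addnK.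
Qed.

Definition bits_agree (T : Type) (t : T -> nat) (b : T -> bool) (L : seq T) (k : nat)
    : bool :=
  all (fun x => bit (t x) k == b x) L.

Lemma count_bits (T : eqType) (t : T -> nat) (b : T -> bool) M (L : seq T) :
  uniq (map t L) -> all (fun x => t x < M) L ->
  (\sum_(0 <= k < 2 ^ M) bits_agree t b L k) * 2 ^ size L = 2 ^ M.
Proof.
elim: M L => [|M IH] L uniq_tL lt_tL.
  by case: L lt_tL {uniq_tL} => [|x L] //; rewrite big_nat1.
(* Split [0, 2 ^ M.+1) into halves by the top bit M: positions below M do not
   distinguish the halves, and by injectivity at most one position is M. *)
have weight_top (L' : seq T) : (forall x, x \in L' -> t x = M) -> uniq (map t L') ->
    (all (fun x => ~~ b x) L' + all b L') * 2 ^ size L' = 2.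
  case: L' => [|x [|y L']] //= t_L'; first by case: (b x).
  by rewrite !t_L' ?inE ?eqxx ?orbT.
set F := bits_agree t b.
set L1 := [seq x <- L | t x < M]; set L2 := [seq x <- L | ~~ (t x < M)].
have F_split k : F L k = F L1 k && F L2 k.
  by rewrite /F -all_cat (perm_all _ (permEl (perm_filterC _ _))).
have t_L2 x : x \in L2 -> t x = M.
  by rewrite mem_filter -leqNgt => /andP[le_Mt /(allP lt_tL)]; lia.
have uniq_tL1 : uniq (map t L1).
  by apply: subseq_uniq uniq_tL; apply/map_subseq/filter_subseq.
have lt_tL1 : all (fun x => t x < M) L1 by apply/allP => x; rewrite mem_filter => /andP[].
have low_half k : k < 2 ^ M -> F L2 k = all (fun x => ~~ b x) L2.
  by move=> lt_k; apply: eq_in_all => x /t_L2 ->; rewrite bit_small.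
have high_half k : k < 2 ^ M -> F L2 (k + 2 ^ M) = all b L2.
  by move=> lt_k; apply: eq_in_all => x /t_L2 ->; rewrite bit_addX_top.
have L1_high k : F L1 (k + 2 ^ M) = F L1 k.
  by apply: eq_in_all => x; rewrite mem_filter => /andP[lt_x _]; rewrite bit_addX.
have sum_halves : \sum_(0 <= k < 2 ^ M.+1) F L k =
    \sum_(0 <= k < 2 ^ M) F L1 k * (all (fun x => ~~ b x) L2 + all b L2).
  rewrite expnS mul2n sum_nat_halves -big_split /=; apply: eq_big_nat => k /andP[_ lt_k].
  by rewrite !F_split low_half // high_half // L1_high -!mulnb mulnDr.
have weight_L2 : (all (fun x => ~~ b x) L2 + all b L2) * 2 ^ size L2 = 2.
  have : uniq (map t L2) by apply: subseq_uniq uniq_tL; apply/map_subseq/filter_subseq.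
  by apply: weight_top.
have size_L : size L = size L1 + size L2 by rewrite !size_filter count_predC.
by rewrite sum_halves -big_distrl /= size_L expnD mulnACA IH // weight_L2 expnSr.
Qed.

Local Open Scope classical_set_scope.
Local Open Scope ring_scope.

Section GridCells.
Variable R : realType.
Local Notation mu := (@lebesgue_measure R).

Definition grid_cells (N K : nat) (g : pred nat) : set R :=
  [set w | 0 <= w /\ w * N%:R < K%:R /\ g (Num.truncn (w * N%:R))].

Variables (N : nat) (g : pred nat).
Hypothesis N_gt0 : (0 < N)%N.

Let N_gt0' : 0 < N%:R :> R. Proof. by rewrite ltr0n. Qed.

Lemma grid_cellsS K : grid_cells N K.+1 g =
  grid_cells N K g `|` (if g K then `[K%:R / N%:R, K.+1%:R / N%:R[%classic else set0).
Proof.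
rewrite /grid_cells; apply/seteqP; split=> w /=.
- move=> [w_ge0 [lt_wK g_w]].
  have [lt_wK'|le_Kw] := ltP (w * N%:R) K%:R; [by left | right].
  have trunc_w : Num.truncn (w * N%:R) = K by apply: truncn_def; rewrite le_Kw.
  by rewrite -trunc_w g_w trunc_w /= in_itv /= ler_pdivrMr // ltr_pdivlMr // le_Kw.
- case=> [[w_ge0 [lt_wK g_w]] | ].
    by split=> //; split=> //; apply: (lt_le_trans lt_wK); rewrite ler_nat.
  case g_K: (g K) => //=; rewrite in_itv /= ler_pdivrMr // ltr_pdivlMr //.
  move=> /andP[le_Kw lt_wK]; split.
    by rewrite -(pmulr_lge0 _ N_gt0') (le_trans _ le_Kw).
  by split=> //; rewrite (@truncn_def _ _ K) ?le_Kw.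
Qed.

Lemma measurable_grid_cells K : measurable (grid_cells N K g).
Proof.
elim: K => [|K IH]; last by rewrite grid_cellsS; apply: measurableU => //; case: (g K).
rewrite (_ : grid_cells _ _ _ = set0) //; apply/seteqP; split=> // w [w_ge0 [+ _]].
by rewrite ltNge mulr_ge0.
Qed.

Lemma grid_cells_measure K :
  mu (grid_cells N K g) = ((\sum_(0 <= k < K) g k)%N%:R / N%:R)%:E.
Proof.
elim: K => [|K IH].
  rewrite big_geq // mul0r (_ : grid_cells _ _ _ = set0) ?measure0 //.
  by apply/seteqP; split=> // w [w_ge0 [+ _]]; rewrite ltNge mulr_ge0.
rewrite grid_cellsS; set cell := (if g K then _ else _).
have measurable_cell : measurable cell.
  by rewrite /cell; case: (g K) => //; exact: measurable_itv.
have disjoint_cell : grid_cells N K g `&` cell = set0.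
  apply/seteqP; split=> // w [[_ [lt_wK _]]]; rewrite /cell; case: (g K) => //=.
  by rewrite in_itv /= ler_pdivrMr // => /andP[le_Kw _]; move: lt_wK; rewrite ltNge le_Kw.
rewrite (measureU mu (measurable_grid_cells K) measurable_cell disjoint_cell).
rewrite big_nat_recr //= natrD mulrDl EFinD; congr (_ + _)%E; first exact: IH.
rewrite /cell; case: (g K); last by rewrite mul0r measure0.
rewrite lebesgue_measure_itv /= lte_fin ltr_pM2r ?invr_gt0 // ltr_nat ltnSn.
by rewrite -EFinB -mulrBl -natrB // subSnn.
Qed.

End GridCells.

Section DyadicDigits.
Variable R : realType.
Local Notation mu := (@lebesgue_measure R).

Lemma truncn_div_nat (x : R) d : 0 <= x -> (0 < d)%N ->
  Num.truncn (x / d%:R) = (Num.truncn x %/ d)%N.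
Proof.
move=> x_ge0 d_gt0; have d_gt0' : 0 < d%:R :> R by rewrite ltr0n.
apply: truncn_def; rewrite ler_pdivlMr // ltr_pdivrMr // -!natrM.
have /andP[le_tx lt_xt] := truncn_itv x_ge0.
by rewrite (le_trans _ le_tx) ?(lt_le_trans lt_xt) ?ler_nat ?leq_divM ?ltn_ceil.
Qed.

Definition digit (j : nat) (w : R) : bool := odd (Num.truncn (w * (2 ^ j.+1)%:R)).

Lemma digit_bit j M w : (j < M)%N -> 0 <= w ->
  digit j w = bit (M - j.+1) (Num.truncn (w * (2 ^ M)%:R)).
Proof.
move=> lt_jM w_ge0; rewrite /bit -truncn_div_nat ?mulr_ge0 ?expn_gt0 //.
rewrite -{1}(subnKC lt_jM) expnD natrM mulrA mulfK // pnatr_eq0 -lt0n expn_gt0.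
Qed.

Lemma uniform_prob01E (C : set R) : measurable (C `&` `[0, 1[) ->
  uniform_prob (@ltr01 R) C = mu (C `&` `[0, 1[).
Proof.
move=> measurable_C01.
have measurable_C1 : measurable (C `&` [set 1]) by rewrite setI1; case: ifP.
have null_C1 : mu (C `&` [set 1]) = 0.
  apply/eqP; rewrite -measure_le0 -(lebesgue_measure_set1 1).
  by apply: le_measure; rewrite ?inE // => w [].
have C01_itv : C `&` `[0, 1] = (C `&` `[0, 1[) `|` (C `&` [set 1]).
  rewrite -setIUr; congr (_ `&` _); apply/seteqP; split=> w /=; rewrite !in_itv /=.
    by case/andP=> -> /=; rewrite le_eqVlt orbC => /orP[->|/eqP]; [left | right].
  by case=> [/andP[-> /ltW ->] | ->] //; rewrite ler01 lexx.
rewrite /uniform_prob integral_uniform_pdf (eq_integral (cst 1%:E)); last first.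
  move=> w; rewrite inE => -[_]; rewrite /uniform_pdf /= in_itv /= => ->.
  by rewrite subr0 invr1.
rewrite integral_cst ?C01_itv ?mul1e; last exact: measurableU.
exact: measureU0.
Qed.

Definition coin_tapes n (w : R) (v : 'I_n) (i : nat) : bool :=
  (0 <= w < 1) && digit (pickle (v, i)) w.

Lemma lt1_mul_pow2 (w : R) M : (w * (2 ^ M)%:R < (2 ^ M)%:R) = (w < 1).
Proof. by rewrite -[X in _ < X]mul1r ltr_pM2r // ltr0n expn_gt0. Qed.

Lemma measurable_coin_tape n (v : 'I_n) i : measurable [set w | coin_tapes w v i].
Proof.
set j := pickle (v, i).
rewrite (_ : [set w | _] = grid_cells (2 ^ j.+1) (2 ^ j.+1) odd).
  exact: measurable_grid_cells (expn_gt0 2 j.+1) _.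
apply/seteqP; split=> w; rewrite /= /coin_tapes /grid_cells /digit /= lt1_mul_pow2 -/j.
  by case/andP=> /andP[-> ->] ->.
by case=> -> [-> ->].
Qed.

Lemma coin_tapes_cylinder n (s : seq ('I_n * nat)) (b : 'I_n * nat -> bool) : uniq s ->
  uniform_prob (@ltr01 R) [set w | forall p, p \in s -> coin_tapes w p.1 p.2 = b p]
  = ((2%:R : R) ^- size s)%:E.
Proof.
move=> uniq_s; set C := [set w | _].
pose M := (\max_(p <- s) (pickle p).+1)%N.
have pickle_lt p : p \in s -> (pickle p < M)%N by move=> p_s; exact: leq_bigmax_seq.
pose t (p : 'I_n * nat) := (M - (pickle p).+1)%N.
have C01 : C `&` `[0, 1[ = grid_cells (2 ^ M) (2 ^ M) (bits_agree t b s).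
  apply/seteqP; split=> w; rewrite /= /grid_cells in_itv /= lt1_mul_pow2.
    case=> C_w /andP[w_ge0 w_lt1]; split=> //; split=> //; apply/allP => p p_s.
    rewrite -digit_bit ?pickle_lt // -(C_w p p_s).
    by rewrite /coin_tapes w_ge0 w_lt1 -surjective_pairing.
  case=> w_ge0 [w_lt1 /allP agree_w]; split; last by rewrite w_ge0.
  move=> p p_s; rewrite /coin_tapes w_ge0 w_lt1 -surjective_pairing /=.
  by rewrite (digit_bit (pickle_lt p p_s)) //; apply/eqP/agree_w.
have count_s :
    (\sum_(0 <= k < 2 ^ M) bits_agree t b s k)%N%:R * 2%:R ^+ size s = (2 ^ M)%:R :> R.
  rewrite -natrX -natrM count_bits //.
    rewrite map_inj_in_uniq // => p q p_s q_s /eqP; rewrite /t eqn_sub2lE ?pickle_lt //.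
    by rewrite eqSS => /eqP /(pcan_inj pickleK).
  by apply/allP => p p_s; rewrite /t; have := pickle_lt p p_s; lia.
have measurable_C01 : measurable (C `&` `[0, 1[).
  by rewrite C01; exact: measurable_grid_cells (expn_gt0 2 M) _.
rewrite uniform_prob01E // C01 (grid_cells_measure _ _ (expn_gt0 2 M)) -count_s.
rewrite invfM mulrA mulfV ?mul1r //.
by apply: contra_eq_neq count_s => ->; rewrite mul0r eq_sym pnatr_eq0 expn_eq0.
Qed.

Lemma coin_tapes_fair n : fair_random_tapes (uniform_prob (@ltr01 R)) (@coin_tapes n).
Proof.
by split=> [v i | s b]; [exact: measurable_coin_tape | exact: coin_tapes_cylinder].
Qed.

End DyadicDigits.

Lemma likely_events_meet (R : realType) d (T : measurableType d) (P : probability T R)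
    (A B : set T) (x : R) : measurable A -> measurable B -> x < 2^-1 ->
  ((1 - x)%:E <= P A)%E -> ((1 - x)%:E <= P B)%E -> A `&` B !=set0.
Proof.
move=> mA mB x_small PA PB; apply/set0P/eqP => disjoint_AB.
have := probability_le1 P (measurableU _ _ mA mB).
rewrite (measureU P mA mB disjoint_AB) => /(le_trans (leeD PA PB)).
by rewrite -EFinD lee_fin; lra.
Qed.

Theorem corollary6p11 (R : realType) (A : LocalAlgorithm) :
  whp_3colors_outerplanar R A ->
  exists k N : nat, (0 < k)%N /\ forall n : nat, (N <= n)%N -> (n <= k * la_rounds A n)%N.
Proof.
move=> whp; exists 8%N, 16%N; split=> // -[|n] // n_ge16.
rewrite leqNgt; apply/negP => few_rounds; set r := la_rounds A n.+1 in few_rounds.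
have colored_whp m := whp n.+1 (holed_sqpath n.+1 m) val (ports_of _)
  (holed_sqpath_simple _ _) (holed_sqpath_outerplanar _ _) val_inj (ports_of_numbering _)
  _ _ _ _ (coin_tapes_fair R n.+1).
have [S0 [measurable_S0 colored_S0 P_S0]] := colored_whp n.+1.
have [Sm [measurable_Sm colored_Sm P_Sm]] := colored_whp (2 * r + 5)%N.
have [|w [/colored_S0 proper_c0 /colored_Sm]] :=
  likely_events_meet measurable_S0 measurable_Sm _ P_S0 P_Sm.
  by rewrite ltf_pV2 ?posrE ?ltr0n // ltr_nat; lia.
by apply: holed_sqpath_not_both_colored proper_c0; lia.
Qed.
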